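(* Fix $\epsilon>0$ and define \[U_1:=\left\{(a,b)\in\bigl([0,1/2)\times[1/2,1)\bigr)\cup\bigl([1/2,1)\times[0,1/2)\bigr):\ a+b<\tfrac34\right\},\] \[U_2:=\left\{(a,b)\in[0,1/2)\times[0,1):\ \tfrac34+\epsilon<a+b<\tfrac54\right\},\] $U:=U_1\cup U_2$ and $S_\epsilon:=\pi(U)\subset\mathbb{T}^2$. Let $\theta_x,\theta_y,\theta_z\in S_\epsilon$ satisfy $2\theta_y=\theta_x+\theta_z$, and write $d:=\frac{\pi^{-1}(\theta_z)-\pi^{-1}(\theta_x)}{2}\in\mathbb{R}^2$. Then \[2\psi(\theta_y)\ge\psi(\theta_x)+\psi(\theta_z)+1/2\quad\text{or}\quad \psi(\theta_y)=\psi(\theta_x)+(d_1+d_2).\]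
   Context: $\mathbb{T}^2:=(\mathbb{R}/\mathbb{Z})^2$. $\pi:\mathbb{R}^2\to\mathbb{T}^2$, $x\mapsto x+\mathbb{Z}^2$, and for $\theta\in\mathbb{T}^2$, $\pi^{-1}(\theta)$ denotes the unique $x\in[0,1)^2$ with $\pi(x)=\theta$. The sum map $\psi:\mathbb{T}^2\to[0,2)$ is $\psi(\theta)=\pi^{-1}(\theta)_1+\pi^{-1}(\theta)_2$. *)

From Stdlib Require Import Reals ZArith.
Open Scope R_scope.

Definition R2 := (R * R)%type.

Definition is_int (r : R) : Prop := exists k : Z, r = IZR k.

(* The torus T^2 = (R/Z)^2 is represented by points of R^2 modulo Z^2:
   two points of R^2 denote the same element of T^2 iff their difference
   lies in Z^2.  pi : R^2 -> T^2 is the identity on representatives. *)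
Definition teq (a b : R2) : Prop :=
  is_int (fst a - fst b) /\ is_int (snd a - snd b).

Definition tadd (a b : R2) : R2 := (fst a + fst b, snd a + snd b).

(* pi^{-1}(theta): the unique representative in [0,1)^2 (fractional parts). *)
Definition pi_inv (t : R2) : R2 := (frac_part (fst t), frac_part (snd t)).

Definition psi (t : R2) : R := fst (pi_inv t) + snd (pi_inv t).

Definition U1 (p : R2) : Prop :=
  let a := fst p in let b := snd p in
  ((0 <= a < 1/2 /\ 1/2 <= b < 1) \/ (1/2 <= a < 1 /\ 0 <= b < 1/2))
  /\ a + b < 3/4.

Definition U2 (eps : R) (p : R2) : Prop :=
  let a := fst p in let b := snd p in
  (0 <= a < 1/2 /\ 0 <= b < 1) /\ 3/4 + eps < a + b < 5/4.

Definition U (eps : R) (p : R2) : Prop := U1 p \/ U2 eps p.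

Definition in_S (eps : R) (t : R2) : Prop := exists u : R2, U eps u /\ teq u t.

(* Lift θx, θy, θz to their representatives x, y, z in U ⊂ [0,1)^2.  Then
   k := 2y - x - z has integer coordinates, so s := 2ψ(θy) - ψ(θx) - ψ(θz)
   = k1 + k2 is an integer.  As d1 + d2 = (ψ(θz) - ψ(θx))/2, the second
   alternative says exactly s = 0, while s ≥ 1 gives the first.  It remains to rule out s ≤ -1.  Every point
   of U has coordinate sum in [1/2, 5/4), so s ≤ -1 forces ψ(θx), ψ(θz) > 3/4
   and ψ(θy) < 3/4: x and z lie in U2 (first coordinates below 1/2) and y in
   U1 (one coordinate at least 1/2).  If y1 ≥ 1/2 then k1 > 0 and k2 > -2;
   if y2 ≥ 1/2 then k1 > -1 and k2 > -1.  Either way s ≥ 0 by integrality. *)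

From Stdlib Require Import Reals Lra Lia.
Open Scope R_scope.

Lemma is_int_cases (r : R) : is_int r -> r <= -1 \/ r = 0 \/ 1 <= r.
Proof.
  intros [k ->].
  destruct (Z.lt_trichotomy k 0) as [Hk | [-> | Hk]].
  - left. apply IZR_le. lia.
  - right. left. reflexivity.
  - right. right. apply IZR_le. lia.
Qed.

Lemma is_int_add (r s : R) : is_int r -> is_int s -> is_int (r + s).
Proof. intros [m ->] [n ->]. exists (m + n)%Z. now rewrite plus_IZR. Qed.

Lemma is_int_opp (r : R) : is_int r -> is_int (- r).
Proof. intros [m ->]. exists (- m)%Z. now rewrite opp_IZR. Qed.

Lemma is_int_sub (r s : R) : is_int r -> is_int s -> is_int (r - s).
Proof. intros Hr Hs. apply is_int_add; [exact Hr | now apply is_int_opp]. Qed.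

Lemma is_int_sub_frac_part (r : R) : is_int (r - frac_part r).
Proof. exists (Int_part r). unfold frac_part. ring. Qed.

Lemma frac_part_unique (r u : R) : 0 <= u < 1 -> is_int (r - u) -> frac_part r = u.
Proof.
  intros Hu Hru.
  assert (Hdiff : is_int (frac_part r - u)).
  { replace (frac_part r - u) with ((r - u) - (r - frac_part r)) by ring.
    apply is_int_sub; [exact Hru | apply is_int_sub_frac_part]. }
  pose proof (base_fp r).
  destruct (is_int_cases _ Hdiff) as [Hlt | [Heq | Hgt]]; lra.
Qed.

Lemma teq_pi_inv (t : R2) : teq t (pi_inv t).
Proof. split; apply is_int_sub_frac_part. Qed.

Lemma pi_inv_unique (u t : R2) :
  0 <= fst u < 1 -> 0 <= snd u < 1 -> teq u t -> pi_inv t = u.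
Proof.
  destruct u as [u1 u2]. intros H1 H2 [E1 E2]. unfold pi_inv. simpl in *.
  f_equal; apply frac_part_unique; try assumption;
    [replace (fst t - u1) with (- (u1 - fst t)) by ring
    | replace (snd t - u2) with (- (u2 - snd t)) by ring];
    now apply is_int_opp.
Qed.

Lemma teq_double_sub (tx ty tz : R2) :
  teq (tadd ty ty) (tadd tx tz) ->
  is_int (2 * fst (pi_inv ty) - fst (pi_inv tx) - fst (pi_inv tz)) /\
  is_int (2 * snd (pi_inv ty) - snd (pi_inv tx) - snd (pi_inv tz)).
Proof.
  intros [Hmid1 Hmid2]. unfold tadd in Hmid1, Hmid2; simpl in Hmid1, Hmid2.
  destruct (teq_pi_inv tx) as [X1 X2], (teq_pi_inv ty) as [Y1 Y2],
    (teq_pi_inv tz) as [Z1 Z2].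
  split.
  - replace (2 * fst (pi_inv ty) - fst (pi_inv tx) - fst (pi_inv tz)) with
      ((fst ty + fst ty - (fst tx + fst tz)) - (fst ty - fst (pi_inv ty))
       - (fst ty - fst (pi_inv ty)) + (fst tx - fst (pi_inv tx))
       + (fst tz - fst (pi_inv tz))) by ring.
    repeat first [assumption | apply is_int_sub | apply is_int_add].
  - replace (2 * snd (pi_inv ty) - snd (pi_inv tx) - snd (pi_inv tz)) with
      ((snd ty + snd ty - (snd tx + snd tz)) - (snd ty - snd (pi_inv ty))
       - (snd ty - snd (pi_inv ty)) + (snd tx - snd (pi_inv tx))
       + (snd tz - snd (pi_inv tz))) by ring.
    repeat first [assumption | apply is_int_sub | apply is_int_add].
Qed.

Section Geometry_of_U.

Variable eps : R.
Hypothesis eps_ge0 : 0 <= eps.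

Lemma U_unit_square (u : R2) : U eps u -> 0 <= fst u < 1 /\ 0 <= snd u < 1.
Proof. unfold U, U1, U2. simpl. lra. Qed.

Lemma U_sum_bounds (u : R2) : U eps u -> 1/2 <= fst u + snd u < 5/4.
Proof. unfold U, U1, U2. simpl. lra. Qed.

Lemma U_large_sum (u : R2) : U eps u -> 3/4 <= fst u + snd u -> fst u < 1/2.
Proof. unfold U, U1, U2. simpl. lra. Qed.

Lemma U_small_sum (u : R2) :
  U eps u -> fst u + snd u <= 3/4 -> 1/2 <= fst u \/ 1/2 <= snd u.
Proof. unfold U, U1, U2. simpl. lra. Qed.

Lemma U_midpoint_defect_nonneg (x y z : R2) :
  U eps x -> U eps y -> U eps z ->
  is_int (2 * fst y - fst x - fst z) -> is_int (2 * snd y - snd x - snd z) ->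
  fst x + snd x + (fst z + snd z) <= 2 * (fst y + snd y).
Proof.
  intros Ux Uy Uz K1 K2.
  destruct (Rle_or_lt (fst x + snd x + (fst z + snd z)) (2 * (fst y + snd y)))
    as [Hle | Hlt]; [exact Hle | exfalso].
  assert (Hs : is_int (2 * (fst y + snd y) - (fst x + snd x + (fst z + snd z)))).
  { replace (2 * (fst y + snd y) - (fst x + snd x + (fst z + snd z))) with
      ((2 * fst y - fst x - fst z) + (2 * snd y - snd x - snd z)) by ring.
    now apply is_int_add. }
  pose proof (U_sum_bounds _ Ux). pose proof (U_sum_bounds _ Uy).
  pose proof (U_sum_bounds _ Uz).
  pose proof (U_unit_square _ Ux). pose proof (U_unit_square _ Uy).
  pose proof (U_unit_square _ Uz).
  destruct (is_int_cases _ Hs) as [Hs1 | [Hs1 | Hs1]]; try lra.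
  assert (Hx1 : fst x < 1/2) by (apply U_large_sum; [exact Ux | lra]).
  assert (Hz1 : fst z < 1/2) by (apply U_large_sum; [exact Uz | lra]).
  destruct (is_int_cases _ K1), (is_int_cases _ K2);
    destruct (U_small_sum _ Uy); lra.
Qed.

End Geometry_of_U.

Lemma in_S_pi_inv (eps : R) (t : R2) : 0 <= eps -> in_S eps t -> U eps (pi_inv t).
Proof.
  intros Heps [u [Hu Hut]].
  destruct (U_unit_square eps u Hu).
  now rewrite (pi_inv_unique u t).
Qed.

Theorem proposition4p6 (eps : R) (tx ty tz : R2) :
  0 < eps ->
  in_S eps tx -> in_S eps ty -> in_S eps tz ->
  teq (tadd ty ty) (tadd tx tz) ->
  let d1 := (fst (pi_inv tz) - fst (pi_inv tx)) / 2 in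
  let d2 := (snd (pi_inv tz) - snd (pi_inv tx)) / 2 in
  2 * psi ty >= psi tx + psi tz + 1/2 \/ psi ty = psi tx + (d1 + d2).
Proof.
  intros Heps Sx Sy Sz Hmid d1 d2.
  assert (Heps0 : 0 <= eps) by lra.
  destruct (teq_double_sub tx ty tz Hmid) as [K1 K2].
  pose proof (U_midpoint_defect_nonneg eps Heps0 _ _ _
    (in_S_pi_inv eps tx Heps0 Sx) (in_S_pi_inv eps ty Heps0 Sy)
    (in_S_pi_inv eps tz Heps0 Sz) K1 K2) as Hdefect.
  assert (Hs : is_int (2 * psi ty - (psi tx + psi tz))).
  { replace (2 * psi ty - (psi tx + psi tz)) with
      ((2 * fst (pi_inv ty) - fst (pi_inv tx) - fst (pi_inv tz))
       + (2 * snd (pi_inv ty) - snd (pi_inv tx) - snd (pi_inv tz)))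
      by (unfold psi; ring).
    now apply is_int_add. }
  unfold d1, d2. unfold psi in *.
  destruct (is_int_cases _ Hs) as [Hs1 | [Hs1 | Hs1]]; [lra | right | left]; lra.
Qed.
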